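(* If $n$ is a product of exactly $2$ or exactly $3$ primes, not necessarily distinct (i.e., $n=pq$ or $n=pqr$ with $p,q,r$ prime), then the $n\times n$ square has no perfect Mondrian partition.
   Context: A Mondrian partition of an $n\times n$ square ($n$ a positive integer) is a dissection of the square into $k\ge 2$ non-overlapping rectangles with positive integer side lengths which are pairwise non-congruent (rectangles of dimensions $a\times b$ and $b\times a$ count as congruent). It is perfect if all its rectangles have the same area. *)

From mathcomp Require Import all_boot.
Set Implicit Arguments. Unset Strict Implicit. Unset Printing Implicit Defensive.

(* An axis-parallel rectangle placed in the n x n square [0,n]x[0,n]:
   lower-left corner (rx, ry), width rw, height rh (all integers). *)
Record rect := Rect { rx : nat; ry : nat; rw : nat; rh : nat }.

Definition rect0 : rect := Rect 0 0 0 0.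

(* the unit cell [i,i+1]x[j,j+1] lies in rectangle r *)
Definition cell_in (r : rect) (i j : nat) : bool :=
  (rx r <= i < rx r + rw r) && (ry r <= j < ry r + rh r).

Definition area (r : rect) : nat := rw r * rh r.

Definition congruent (r1 r2 : rect) : bool :=
  ((rw r1 == rw r2) && (rh r1 == rh r2)) || ((rw r1 == rh r2) && (rh r1 == rw r2)).

(* s is a Mondrian partition of the n x n square:
   k = size s >= 2 rectangles with positive integer sides, inside the square,
   covering every unit cell exactly once (i.e. a dissection with no overlap),
   pairwise non-congruent. *)
Definition mondrian_partition (n : nat) (s : seq rect) : Prop :=
  [/\ 2 <= size s,
      (forall a, a < size s ->
         let r := nth rect0 s a in
         [/\ 0 < rw r, 0 < rh r, rx r + rw r <= n & ry r + rh r <= n]),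
      (forall i j, i < n -> j < n -> count (fun r => cell_in r i j) s = 1)
    & (forall a b, a < size s -> b < size s -> a <> b ->
         ~~ congruent (nth rect0 s a) (nth rect0 s b))].

Definition perfect_mondrian_partition (n : nat) (s : seq rect) : Prop :=
  mondrian_partition n s /\
  (forall a b, a < size s -> b < size s ->
     area (nth rect0 s a) = area (nth rect0 s b)).

From mathcomp Require Import all_boot zify.
Set Implicit Arguments. Unset Strict Implicit. Unset Printing Implicit Defensive.

(* Let the k >= 2 pieces all have area A, so that k * A = n * n.
   - Geometry (k = 2, 3).  Some piece owns two of the four corner cells of the square.
     Owning two opposite corners makes it the whole square; owning two adjacent ones
     makes it a strip of full width, and the remaining pieces are then forced to share
     a side length, hence (having equal areas) to be congruent.  So k >= 4.
   - Counting (k >= 4).  Choose in every piece a side by some rule; non-congruent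
     pieces of equal area get distinct sides, so k is at most the number of possible
     chosen sides ([side_bound]).  Choosing a side dividing A / e, for a prime factor e
     of A, shows k <= 2 ^ (Omega(A) - 1), while k >= 2 ^ Omega(k) and
     Omega(k) + Omega(A) = 2 Omega(n); hence Omega(k) < Omega(n).  This leaves
     k prime (for n = pq, and for n = pqr with k >= 5) and k in {4, 6} (for n = pqr);
     in each case an explicit enumeration of the admissible sides gives fewer than k
     values. *)

Definition inside (n : nat) (r : rect) : Prop :=
  [/\ 0 < rw r, 0 < rh r, rx r + rw r <= n & ry r + rh r <= n].

Lemma congruentC (r1 r2 : rect) : congruent r1 r2 = congruent r2 r1.
Proof.
rewrite /congruent; case: r1 r2 => ? ? w1 h1 [? ? w2 h2] /=.
by apply/idP/idP; case/orP=> /andP[/eqP-> /eqP->]; rewrite !eqxx ?orbT.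
Qed.

(* Two rectangles of the same area sharing a side length [d > 0] are congruent:
   this is how non-congruence turns into constraints on side lengths. *)
Lemma congruent_common_side (r1 r2 : rect) (d : nat) :
  (d = rw r1 \/ d = rh r1) -> (d = rw r2 \/ d = rh r2) ->
  0 < d -> area r1 = area r2 -> congruent r1 r2.
Proof.
case: r1 r2 => x1 y1 w1 h1 [x2 y2 w2 h2]; rewrite /area /congruent /=.
move=> [] -> [] E Hd Ha; subst.
- by apply/orP; left; rewrite eqxx /=; apply/eqP; nia.
- by apply/orP; right; rewrite eqxx /=; apply/eqP; nia.
- by apply/orP; right; rewrite eqxx andbT; apply/eqP; nia.
- by apply/orP; left; rewrite eqxx andbT; apply/eqP; nia.
Qed.

Lemma count_window a w n :
  \sum_(i < n) ((a <= i) && (i < a + w)) = minn (a + w) n - minn a n.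
Proof.
elim: n => [|n IH]; first by rewrite big_ord0; lia.
by rewrite big_ord_recr /= IH; case: (boolP ((a <= n) && (n < a + w))) => /=; lia.
Qed.

Lemma cells_of_rect n r : rx r + rw r <= n -> ry r + rh r <= n ->
  \sum_(i < n) \sum_(j < n) cell_in r i j = area r.
Proof.
move=> Hx Hy; rewrite /cell_in /area.
transitivity (\sum_(i < n) ((rx r <= i) && (i < rx r + rw r)) * rh r).
  apply: eq_bigr => i _; case: (_ && _) => /=; last by rewrite mul0n big1.
  by rewrite mul1n count_window; lia.
by rewrite -big_distrl /= count_window; congr (_ * _); lia.
Qed.

(* Counting the covered cells twice: the areas of a Mondrian partition add up to [n*n]. *)
Lemma mondrian_total_area n s : mondrian_partition n s ->
  \sum_(a < size s) area (nth rect0 s a) = n * n.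
Proof.
case=> _ Hin Hc _.
transitivity (\sum_(i < n) \sum_(j < n) count (fun r => cell_in r i j) s).
  have count_sum i j : count (fun r => cell_in r i j) s =
      \sum_(a < size s) cell_in (nth rect0 s a) i j.
    by rewrite -sum1_count big_mkcond (big_nth rect0) big_mkord.
  under [RHS]eq_bigr => i _ do under eq_bigr => j _ do rewrite count_sum.
  under [RHS]eq_bigr => i _ do rewrite exchange_big /=.
  rewrite [RHS]exchange_big /=; apply: eq_bigr => a _.
  by have [_ _ Hx Hy] := Hin a (ltn_ord a); rewrite cells_of_rect.
under eq_bigr => i _ do under eq_bigr => j _ do rewrite Hc //.
under eq_bigr => i _ do rewrite sum_nat_const card_ord muln1.
by rewrite sum_nat_const card_ord.
Qed.

Lemma perfect_area n s : perfect_mondrian_partition n s ->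
  size s * area (nth rect0 s 0) = n * n.
Proof.
move=> [M same]; have [k2 _ _ _] := M.
rewrite -(mondrian_total_area M) -[X in X * _]card_ord -sum_nat_const.
by apply: eq_bigr => a _; apply: same => //; lia.
Qed.

Lemma one_of3 (b1 b2 b3 : bool) : b1 + b2 + b3 = 1 ->
  [\/ [/\ b1, ~~ b2 & ~~ b3], [/\ ~~ b1, b2 & ~~ b3] | [/\ ~~ b1, ~~ b2 & b3]].
Proof. by case: b1; case: b2; case: b3 => // _; [constructor 1|constructor 2|constructor 3]. Qed.

Definition perfect3 (n : nat) (r1 r2 r3 : rect) : Prop :=
  [/\ [/\ inside n r1, inside n r2 & inside n r3],
      (forall i j, i < n -> j < n -> cell_in r1 i j + cell_in r2 i j + cell_in r3 i j = 1),
      area r1 = area r2 /\ area r1 = area r3,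
      3 * area r1 = n * n &
      [/\ ~~ congruent r1 r2, ~~ congruent r1 r3 & ~~ congruent r2 r3]].

(* [perfect3] is invariant under relabelling the pieces and under the symmetries of
   the square, which reduces the corner analysis to a single configuration. *)
Lemma perfect3_swap12 n r1 r2 r3 : perfect3 n r1 r2 r3 -> perfect3 n r2 r1 r3.
Proof.
case=> [[i1 i2 i3] cov [a12 a13] tot [n12 n13 n23]]; split; rewrite -?a12 //.
- by move=> i j Hi Hj; rewrite -(cov i j Hi Hj) [cell_in r2 _ _ + _]addnC.
- by split; rewrite // congruentC.
Qed.

Lemma perfect3_swap23 n r1 r2 r3 : perfect3 n r1 r2 r3 -> perfect3 n r1 r3 r2.
Proof.
case=> [[i1 i2 i3] cov [a12 a13] tot [n12 n13 n23]]; split => //.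
- by move=> i j Hi Hj; rewrite -(cov i j Hi Hj) -!addnA [cell_in r3 _ _ + _]addnC.
- by split; rewrite // congruentC.
Qed.

Definition flip (n : nat) (r : rect) : rect := Rect (rx r) (n - (ry r + rh r)) (rw r) (rh r).
Definition transpose (r : rect) : rect := Rect (ry r) (rx r) (rh r) (rw r).

Lemma cell_in_flip n r i j : j < n -> ry r + rh r <= n ->
  cell_in (flip n r) i j = cell_in r i (n.-1 - j).
Proof. by case: r => x y w h; rewrite /cell_in /= => Hj Hr; apply/idP/idP; lia. Qed.

Lemma cell_in_transpose r i j : cell_in (transpose r) i j = cell_in r j i.
Proof. by rewrite /cell_in /= andbC. Qed.

Lemma perfect3_flip n r1 r2 r3 : perfect3 n r1 r2 r3 ->
  perfect3 n (flip n r1) (flip n r2) (flip n r3).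
Proof.
case=> [[i1 i2 i3] cov areas tot ncong].
have inside_flip r : inside n r -> inside n (flip n r).
  by case: r => x y w h [/= ? ? ? ?]; split => //=; lia.
split => //; first by split; apply: inside_flip.
move=> i j Hi Hj; case: i1 i2 i3 => [_ _ _ ?] [_ _ _ ?] [_ _ _ ?].
by rewrite !cell_in_flip //; apply: cov; lia.
Qed.

Lemma perfect3_transpose n r1 r2 r3 : perfect3 n r1 r2 r3 ->
  perfect3 n (transpose r1) (transpose r2) (transpose r3).
Proof.
case=> [[i1 i2 i3] cov [a12 a13] tot [n12 n13 n23]].
have inside_t r : inside n r -> inside n (transpose r).
  by case: r => x y w h [/= ? ? ? ?]; split.
have area_t r : area (transpose r) = area r by rewrite /area mulnC.
have cong_t r r' : congruent (transpose r) (transpose r') = congruent r r'.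
  by rewrite /congruent /= ![(rh _ == _) && _]andbC.
split; rewrite ?area_t ?cong_t //; first by split; apply: inside_t.
by move=> i j Hi Hj; rewrite !cell_in_transpose; apply: cov.
Qed.

(* A piece containing two opposite corner cells is the whole square, whose area
   [n * n] is not a third of [n * n]. *)
Lemma perfect3_diagonal n r1 r2 r3 : perfect3 n r1 r2 r3 ->
  cell_in r1 0 0 && cell_in r1 n.-1 n.-1 || cell_in r1 n.-1 0 && cell_in r1 0 n.-1 -> False.
Proof.
case=> [[[? ? ? ?] _ _] _ _ tot _]; rewrite /cell_in.
move=> diag; have [w1 h1] : rw r1 = n /\ rh r1 = n by lia.
by move: tot; rewrite /area w1 h1; nia.
Qed.

(* The key configuration: if [r1] is a horizontal strip along the bottom side and [r2]
   owns the top-left corner, then [r3] owns the top-right corner, and both [r2] and [r3]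
   must start right above the strip and reach the top; so they have the same height
   and are congruent. *)
Lemma perfect3_bottom_strip n r1 r2 r3 : perfect3 n r1 r2 r3 ->
  cell_in r1 0 0 -> cell_in r1 n.-1 0 -> cell_in r2 0 n.-1 -> False.
Proof.
case=> [[i1 i2 i3] cov [a12 a13] tot [/negP n12 /negP n13 /negP n23]] c00 cn0 c0n.
have owner i j : i < n -> j < n -> _ := fun Hi Hj => one_of3 (cov i j Hi Hj).
move: i1 i2 i3 owner c00 cn0 c0n; rewrite /inside /cell_in.
move=> [? ? ? ?] [? ? ? ?] [? ? ? ?] owner c00 cn0 c0n.
have [w1n x10 y10] : [/\ rw r1 = n, rx r1 = 0 & ry r1 = 0] by split; lia.
have h1n : rh r1 < n.
  by rewrite ltn_neqAle; apply/andP; split; [apply/eqP=> h1; move: tot; rewrite /area; nia | lia].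
clear c00 cn0.
have same_width r r' : rw r = n -> rw r' = n -> area r = area r' -> congruent r r'.
  by move=> w w' a; apply: (congruent_common_side (d := n)); [left|left|lia|].
(* the top-right corner belongs to r3 *)
have [[c _ _]|[_ c _]|[_ _ c3nn]] := owner n.-1 n.-1 ltac:(lia) ltac:(lia); first lia.
  by apply: n12; apply: same_width => //; lia.
(* the cells just above the strip, at both ends, belong to r2 and r3 respectively *)
have [[c _ _]|[_ c2 _]|[_ _ c]] := owner 0 (rh r1) ltac:(lia) ltac:(lia); first lia;
  last by apply: n13; apply: same_width => //; lia.
have [[c _ _]|[_ c _]|[_ _ c3]] := owner n.-1 (rh r1) ltac:(lia) ltac:(lia); first lia.
  by apply: n12; apply: same_width => //; lia.
(* neither r2 nor r3 dips into the strip, so both span the rows [rh r1, n) *)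
have y2 : rh r1 <= ry r2.
  have [[_ c _]|[c _ _]|[_ c _]] := owner 0 (ry r2) ltac:(lia) ltac:(lia); lia.
have y3 : rh r1 <= ry r3.
  have [[_ _ c]|[_ _ c]|[c _ _]] := owner n.-1 (ry r3) ltac:(lia) ltac:(lia); lia.
apply: n23; apply: (congruent_common_side (d := rh r2)); [by right|right; lia|lia|].
by rewrite -a12 -a13.
Qed.

(* No piece owns both bottom corners: whoever owns the top-left corner is either the
   same piece (a diagonal) or one of the other two (the strip configuration). *)
Lemma perfect3_bottom_corners n r1 r2 r3 : perfect3 n r1 r2 r3 ->
  cell_in r1 0 0 -> cell_in r1 n.-1 0 -> False.
Proof.
move=> P c00 cn0; have [[[? ? ? ?] _ _] cov _ _ _] := P.
have [[c _ _]|[_ c _]|[_ _ c]] := one_of3 (cov 0 n.-1 ltac:(lia) ltac:(lia)).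
- by apply: (perfect3_diagonal P); rewrite cn0 c orbT.
- exact: perfect3_bottom_strip P c00 cn0 c.
- exact: perfect3_bottom_strip (perfect3_swap23 P) c00 cn0 c.
Qed.

Lemma perfect3_top_corners n r1 r2 r3 : perfect3 n r1 r2 r3 ->
  cell_in r1 0 n.-1 -> cell_in r1 n.-1 n.-1 -> False.
Proof.
move=> P c0 c1; have [[[? _ ? ?] _ _] _ _ _ _] := P.
by apply: (perfect3_bottom_corners (perfect3_flip P)); rewrite cell_in_flip ?subn0 //; lia.
Qed.

Definition corners (n : nat) : seq (nat * nat) :=
  [:: (0, 0); (n.-1, 0); (0, n.-1); (n.-1, n.-1)].
Definition owns (r : rect) (c : nat * nat) : bool := cell_in r c.1 c.2.

Lemma perfect3_one_corner n r1 r2 r3 : perfect3 n r1 r2 r3 ->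
  count (owns r1) (corners n) <= 1.
Proof.
move=> P; have PT := perfect3_transpose P.
have bottom := perfect3_bottom_corners P; have top := perfect3_top_corners P.
have left := perfect3_bottom_corners PT; have right := perfect3_top_corners PT.
rewrite !cell_in_transpose in left right.
move: bottom top left right (perfect3_diagonal P); rewrite /corners /owns /=.
case: (cell_in r1 0 0); case: (cell_in r1 n.-1 0); case: (cell_in r1 0 n.-1);
  case: (cell_in r1 n.-1 n.-1) => //= b t l r d;
  exfalso; by [apply: b | apply: t | apply: l | apply: r | exact: (d isT)].
Qed.

Lemma count_partition3 (T : Type) (a b c : pred T) (s : seq T) :
  all (fun x => a x + b x + c x == 1) s -> count a s + count b s + count c s = size s.
Proof. by elim: s => //= x s IH /andP[/eqP one /IH]; lia. Qed.

(* Four corners, three pieces, at most one corner each: impossible. *)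
Lemma no_perfect3 n r1 r2 r3 : perfect3 n r1 r2 r3 -> False.
Proof.
move=> P; have [[[? _ ? _] _ _] cov _ _ _] := P.
have c1 := perfect3_one_corner P.
have c2 := perfect3_one_corner (perfect3_swap12 P).
have c3 := perfect3_one_corner (perfect3_swap12 (perfect3_swap23 P)).
have owners : all (fun c => owns r1 c + owns r2 c + owns r3 c == 1) (corners n).
  by rewrite /= /owns /= !cov //; lia.
have := count_partition3 owners; rewrite [size _]/=; lia.
Qed.

Definition perfect2 (n : nat) (r1 r2 : rect) : Prop :=
  [/\ inside n r1 /\ inside n r2,
      (forall i j, i < n -> j < n -> cell_in r1 i j + cell_in r2 i j = 1),
      area r1 = area r2, 2 * area r1 = n * n & ~~ congruent r1 r2].

(* The piece owning the bottom-left corner cannot own the top-right one as well (it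
   would be the whole square); the owners of the two remaining corners then force
   either a piece equal to the whole square or two pieces with a common full side. *)
Lemma no_perfect2 n r1 r2 : perfect2 n r1 r2 -> False.
Proof.
wlog c00 : r1 r2 / cell_in r1 0 0.
  move=> gen P; have [[i1 i2] cov a12 tot n12] := P.
  have [? _ ? _] := i1; move: (cov 0 0 ltac:(lia) ltac:(lia)).
  case c1 : (cell_in r1 0 0); first by move=> _; exact: gen _ _ c1 P.
  move=> /= c2.
  apply: (gen r2 r1); first by case: (cell_in r2 0 0) c2.
  split; rewrite -?a12 1?congruentC //.
  by move=> i j Hi Hj; rewrite addnC cov.
case=> [[[? ? ? ?] [? ? ? ?]] cov a12 tot /negP n12].
have r2E i j : i < n -> j < n -> cell_in r2 i j = ~~ cell_in r1 i j.
  by move=> Hi Hj; have := cov i j Hi Hj; case: (cell_in r1 i j); case: (cell_in r2 i j).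
have n1 : n.-1 < n by lia.
have not_whole r : area r = area r1 -> rw r = n -> rh r = n -> False.
  by move=> ar w h; move: tot; rewrite -ar /area w h; nia.
have common_side d : d = n -> d = rw r1 \/ d = rh r1 -> d = rw r2 \/ d = rh r2 -> False.
  by move=> dn s1 s2; apply: n12; apply: (congruent_common_side (d := d)) => //; lia.
have cnn : cell_in r2 n.-1 n.-1.
  rewrite r2E //; apply/negP => cnn; apply: (not_whole r1) => //;
    move: c00 cnn; rewrite /cell_in; lia.
have c0n2 := r2E 0 n.-1 ltac:(lia) n1; have cn02 := r2E n.-1 0 n1 ltac:(lia).
case cn0 : (cell_in r1 n.-1 0) in cn02; case c0n : (cell_in r1 0 n.-1) in c0n2;
  move: c00 cnn cn0 c0n cn02 c0n2; rewrite /cell_in /= => c00 cnn cn0 c0n cn02 c0n2.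
- by apply: (not_whole r1) => //; lia.
- by apply: (common_side n) => //; [left|left]; lia.
- by apply: (common_side n) => //; [right|right]; lia.
- by apply: (not_whole r2) => //; lia.
Qed.

Lemma perfect_four_pieces n s : perfect_mondrian_partition n s -> 4 <= size s.
Proof.
move=> P; have tot := perfect_area P; move: P => [[k2 Hin Hc Hnc] same].
case: s k2 Hin Hc Hnc same tot => [|r1 [|r2 [|r3 [|r4 s]]]] //= _ Hin Hc Hnc same tot.
- exfalso; apply: (@no_perfect2 n r1 r2); split; first by split; [apply: (Hin 0) | apply: (Hin 1)].
  + by move=> i j Hi Hj; have := Hc i j Hi Hj; rewrite /= addn0.
  + exact: (same 0 1).
  + by rewrite -tot.
  + exact: (Hnc 0 1).
- exfalso; apply: (@no_perfect3 n r1 r2 r3); split.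
  + by split; [apply: (Hin 0) | apply: (Hin 1) | apply: (Hin 2)].
  + by move=> i j Hi Hj; have := Hc i j Hi Hj; rewrite /= addn0 addnA.
  + by split; [apply: (same 0 1) | apply: (same 0 2)].
  + by rewrite -tot.
  + by split; [apply: (Hnc 0 1) | apply: (Hnc 0 2) | apply: (Hnc 1 2)].
Qed.

(* A side-counting bound, stated so that it can be fed with any side selector: if a
   predicate [P] picks a side of every factorization [w * h = A] with [w, h <= n], and
   the list [L] contains every side so picked, then [L] has at least [k] entries. *)
Definition side_bound (n A k : nat) : Prop := forall (P : pred nat) (L : seq nat),
  (forall w h, w * h = A -> w <= n -> h <= n -> P w || P h) ->
  (forall d e, d * e = A -> d <= n -> e <= n -> P d -> d \in L) ->
  k <= size L.

(* The pieces of a perfect partition satisfy the side bound: two pieces with the same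
   selected side and the same area would be congruent, so selection is injective. *)
Lemma perfect_side_bound n s : perfect_mondrian_partition n s ->
  side_bound n (area (nth rect0 s 0)) (size s).
Proof.
move=> [[k2 Hin _ Hnc] same] P L Hcov Hmem.
set A := area _ in Hcov Hmem.
have HA a : a < size s -> area (nth rect0 s a) = A by move=> Ha; apply: same => //; lia.
pose f r := if P (rw r) then rw r else rh r.
have fside r : f r = rw r \/ f r = rh r by rewrite /f; case: (P (rw r)); [left|right].
have Hu : uniq (map f s).
  apply/(uniqP 0) => i j; rewrite !inE size_map => Hi Hj.
  rewrite !(nth_map rect0) // => E; case: (eqVneq i j) => // Nij; exfalso.
  have [Hw Hh _ _] := Hin i Hi.
  have /negP := Hnc i j Hi Hj (elimN eqP Nij); apply.
  apply: (congruent_common_side (d := f (nth rect0 s i))) => //; first by rewrite E.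
    by case: (fside (nth rect0 s i)) => ->.
  by rewrite !HA.
rewrite -(size_map f); apply: uniq_leq_size Hu _ => d /(nthP 0) [i].
rewrite size_map => Hi; rewrite (nth_map rect0) // => <-.
have [_ _ Hx Hy] := Hin i Hi; have Ea := HA i Hi; rewrite /area in Ea.
have Hw : rw (nth rect0 s i) <= n by lia.
have Hh : rh (nth rect0 s i) <= n by lia.
have := Hcov _ _ Ea Hw Hh; rewrite /f.
case: ifP => Pw Hc; first exact: Hmem _ _ Ea Hw Hh Pw.
by apply: (Hmem _ (rw (nth rect0 s i))) => //; rewrite mulnC.
Qed.

Fixpoint prodn (s : seq nat) : nat := if s is x :: s' then x * prodn s' else 1.

Lemma prodn_cat s t : prodn (s ++ t) = prodn s * prodn t.
Proof. by elim: s => /= [|x s ->]; rewrite ?mul1n ?mulnA. Qed.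

Lemma prodn_mask s m : size m = size s ->
  prodn s = prodn (mask m s) * prodn (mask (map negb m) s).
Proof.
elim: s m => [|x s IH] [|b m] //= /eqP; rewrite eqSS => /eqP /IH ->.
by case: b => /=; [rewrite mulnA | rewrite mulnCA].
Qed.

Lemma size_mask_split (T : Type) (s : seq T) m : size m = size s ->
  size (mask m s) + size (mask (map negb m) s) = size s.
Proof.
elim: s m => [|x s IH] [|b m] //= /eqP; rewrite eqSS => /eqP /IH <-.
by case: b => /=; rewrite ?addSn ?addnS.
Qed.

Lemma dvd_prodn s d : all prime s -> d %| prodn s ->
  exists2 m : bitseq, size m = size s & d = prodn (mask m s).
Proof.
elim: s d => [|x s IH] d /=; first by rewrite dvdn1 => _ /eqP ->; exists [::].
case/andP=> px ps; have [/dvdnP [d' ->] | ndx] := boolP (x %| d).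
  rewrite mulnC dvdn_pmul2l ?prime_gt0 // => /(IH _ ps) [m sm ->].
  by exists (true :: m) => /=; rewrite ?sm.
rewrite Gauss_dvdr; last by rewrite coprime_sym prime_coprime.
move=> /(IH _ ps) [m sm ->].
by exists (false :: m); rewrite /= ?sm.
Qed.

Lemma prodn_ge s : all prime s -> 2 ^ size s <= prodn s.
Proof.
elim: s => //= x s IH /andP [px /IH ge]; rewrite expnS.
exact: leq_mul (prime_gt1 px) ge.
Qed.

Definition subprods (s : seq nat) : seq nat :=
  [seq prodn (mask (val m) s) | m : (size s).-tuple bool].

Lemma size_subprods s : size (subprods s) = 2 ^ size s.
Proof. by rewrite size_image card_tuple card_bool. Qed.

Lemma mem_subprods s d : all prime s -> d %| prodn s -> d \in subprods s.
Proof.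
move=> ps /(dvd_prodn ps) [m /eqP sm ->].
by apply/imageP; exists (Tuple sm).
Qed.

Lemma factor_divides e T w h : prime e -> w * h = e * T -> (w %| T) || (h %| T).
Proof.
move=> pe E; have [/dvdnP [w' Ew] | nd] := boolP (e %| w).
  apply/orP; right; apply/dvdnP; exists w'; apply/eqP.
  by rewrite -(eqn_pmul2l (prime_gt0 pe)); apply/eqP; rewrite Ew in E; lia.
apply/orP; left; rewrite -(@Gauss_dvdl _ _ e); last by rewrite coprime_sym prime_coprime.
by rewrite mulnC -E dvdn_mulr.
Qed.

(* If [A] is a product of [m] primes, at most [2 ^ (m - 1)] pairwise non-congruent
   rectangles of area [A] exist: peel off one prime factor [e] of [A] and select, in each
   piece, a side dividing [A / e]; those sides are sub-products of the other factors. *)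
Lemma side_bound_omega n k M : side_bound n (prodn M) k -> all prime M ->
  k <= 2 ^ (size M).-1.
Proof.
case: M => [|e T] /= S pM.
  suff : k <= size [:: 1] by [].
  apply: (S predT) => // d e' /eqP; rewrite muln_eq1 => /andP [/eqP -> _] _ _ _.
  exact: mem_head.
case/andP: pM => pe pT; rewrite -(size_subprods T).
apply: (S (fun d => d %| prodn T)); first by move=> w h /(factor_divides pe).
by move=> d e' _ _ _; apply: mem_subprods.
Qed.

Lemma split_square N k A : all prime N -> 0 < k -> k * A = prodn N * prodn N ->
  exists K M, [/\ all prime K, all prime M, k = prodn K, A = prodn M &
                  size K + size M = (size N).*2].
Proof.
move=> pN k_pos E.
have pNN : all prime (N ++ N) by rewrite all_cat pN.
have [mu smu Ek] : exists2 mu : bitseq, size mu = size (N ++ N) & k = prodn (mask mu (N ++ N)).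
  by apply: dvd_prodn pNN _; rewrite prodn_cat -E dvdn_mulr.
exists (mask mu (N ++ N)), (mask (map negb mu) (N ++ N)); split; rewrite ?all_mask //.
  apply/eqP; rewrite -(eqn_pmul2l k_pos) E -prodn_cat.
  by rewrite (prodn_mask smu) -Ek.
by rewrite size_mask_split // size_cat addnn.
Qed.

(* With [k >= 2] pieces, [k] has fewer prime factors than [n]: writing [k * A = n * n]
   with [k = prodn K] and [A] a product of [m = 2 * size N - size K] primes, the bounds
   [2 ^ size K <= k <= 2 ^ (m - 1)] force [size K < size N]. *)
Lemma few_prime_factors N A k : all prime N -> 1 < k ->
  k * A = prodn N * prodn N -> side_bound (prodn N) A k ->
  exists K, [/\ all prime K, k = prodn K, size K < size N &
                k <= 2 ^ ((size N).*2 - size K).-1].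
Proof.
move=> pN k_gt1 E S.
have [K [M [pK pM Ek EA sKM]]] := split_square pN (ltnW k_gt1) E.
have upper : k <= 2 ^ (size M).-1 by apply: (side_bound_omega (n := prodn N)); rewrite -?EA.
have lower : 2 ^ size K <= k by rewrite Ek prodn_ge.
have sK_pos : 0 < size K by rewrite lt0n size_eq0; apply/eqP => K0; move: k_gt1; rewrite Ek K0.
exists K; split => //; last by rewrite (_ : (size N).*2 - size K = size M) //; lia.
rewrite ltnNge; apply/negP => sK.
have : 2 ^ (size M).-1 < 2 ^ size K by rewrite ltn_exp2l //; lia.
lia.
Qed.

Lemma dvd_prod4 a b c e d : all prime [:: a; b; c; e] -> d %| a * b * c * e ->
  exists i j k l : bool, d = a ^ i * b ^ j * c ^ k * e ^ l.
Proof.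
move=> ps; rewrite (_ : a * b * c * e = prodn [:: a; b; c; e]) /=; last by rewrite muln1 !mulnA.
case/(dvd_prodn ps) => -[|i [|j [|k [|l [|]]]]] // _ ->; exists i, j, k, l.
by case: i; case: j; case: k; case: l; rewrite /= ?expn0 ?expn1 ?mul1n ?muln1 ?mulnA.
Qed.

Lemma smaller_side A w h : w * h = A -> (w * w <= A) || (h * h <= A).
Proof. by move=> <-; case: (leqP w h) => wh; apply/orP; [left|right]; nia. Qed.

(* Four pieces in the square of side [2uv] have area [(uv)^2]; the smaller side [d] of a
   piece satisfies [uv <= 2d], [d <= uv] and [d | (uv)^2], which leaves only three
   values ([uv], [u^2] and [v] when [u <= v]). *)
Lemma no_four_pieces u v : prime u -> prime v ->
  ~ side_bound (2 * u * v) ((u * v) * (u * v)) 4.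
Proof.
wlog uv : u v / u <= v.
  move=> gen pu pv; case: (leqP u v) => [|/ltnW] vu; first exact: gen.
  by rewrite [2 * u * v]mulnAC [u * v]mulnC; apply: gen.
move=> pu pv S; have u2 := prime_gt1 pu; have v2 := prime_gt1 pv.
suff : 4 <= size [:: u * v; u * u; v] by [].
apply: (S (fun d => d * d <= (u * v) * (u * v))) => [w h /smaller_side //|d e E _ en /=].
rewrite !mulnn leq_exp2r // => hi; have lo : u * v <= 2 * d by nia.
have [i [j [k [l Ed]]]] : exists i j k l : bool, d = u ^ i * u ^ j * v ^ k * v ^ l.
  apply: dvd_prod4; first by rewrite /= pu pv.
  by rewrite (_ : u * u * v * v = (u * v) * (u * v)) -?E ?dvdn_mulr //; nia.
clear E en; subst d; rewrite !inE.
case: i j k l lo hi => [] [] [] [] /= lo hi; rewrite ?expn0 ?expn1 ?mul1n ?muln1 in lo hi *;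
  first [ by rewrite ?eqxx ?orbT | exfalso; nia
        | (have uv' : u = v by nia); subst v; by rewrite ?eqxx ?orbT ].
Qed.

(* Six pieces in the square of side [6s] have area [6 s^2]; the smaller side [d] of a
   piece satisfies [s <= d], [d^2 <= 6 s^2] and [d | 6 s^2], which leaves only five
   values. *)
Lemma no_six_pieces s : prime s -> ~ side_bound (2 * 3 * s) (2 * 3 * (s * s)) 6.
Proof.
move=> ps S; have s2 := prime_gt1 ps.
suff : 6 <= size [:: s; 2 * s; 3; 4; 6] by [].
apply: (S (fun d => d * d <= 2 * 3 * (s * s))) => [w h /smaller_side //|d e E _ en /= hi].
have lo : s <= d by nia.
have [i [j [k [l Ed]]]] : exists i j k l : bool, d = 2 ^ i * 3 ^ j * s ^ k * s ^ l.
  apply: dvd_prod4; first by rewrite /= ps.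
  by rewrite -mulnA -E dvdn_mulr.
clear E en; subst d; rewrite !inE.
case: i j k l lo hi => [] [] [] [] /= lo hi; rewrite ?expn0 ?expn1 ?mul1n ?muln1 in lo hi *;
  first [ by rewrite ?eqxx ?orbT | exfalso; nia
        | (have s_eq : s = 2 by nia); subst s; by [] ].
Qed.

(* By Euclid's lemma every piece has a side dividing [(uv)^2]; such a side lies in
   [[uv, xuv]], which leaves [uv], [u^2 v], [u v^2], [v^2] (for [u <= v]) and [(uv)^2],
   the latter only when [uv <= x]: too few values in every case. *)
Lemma no_prime_pieces x u v : prime x -> 5 <= x -> prime u -> prime v ->
  ~ side_bound (x * u * v) (x * ((u * v) * (u * v))) x.
Proof.
wlog uv : u v / u <= v.
  move=> gen px x5 pu pv; case: (leqP u v) => [|/ltnW] vu; first exact: gen.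
  by rewrite [x * u * v]mulnAC [u * v]mulnC; apply: gen.
move=> px x5 pu pv S; have u2 := prime_gt1 pu; have v2 := prime_gt1 pv.
pose P d := d %| (u * v) * (u * v).
have cover w h : w * h = x * ((u * v) * (u * v)) -> w <= x * u * v -> h <= x * u * v ->
    P w || P h.
  by move=> /(factor_divides px).
have cand d e : d * e = x * ((u * v) * (u * v)) -> d <= x * u * v -> e <= x * u * v ->
    P d -> d \in [:: u * v; u * u * v; u * v * v; v * v] \/
           (d = u * u * v * v /\ u * v <= x).
  move=> E dn en Pd; have lo : u * v <= d by nia.
  have [i [j [k [l Ed]]]] : exists i j k l : bool, d = u ^ i * u ^ j * v ^ k * v ^ l.
    apply: dvd_prod4; first by rewrite /= pu pv.
    by rewrite (_ : u * u * v * v = (u * v) * (u * v)) //; nia.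
  clear E en Pd; subst d; rewrite !inE.
  case: i j k l lo dn => [] [] [] [] /= lo dn; rewrite ?expn0 ?expn1 ?mul1n ?muln1 in lo dn *;
    first [ left; by rewrite ?eqxx ?orbT | right; split => //; nia | exfalso; nia
          | (have uv' : u = v by nia); subst v; left; by rewrite ?eqxx ?orbT ].
have [ltuv | equv] : u < v \/ u = v by lia.
- case: (eqVneq x 5) => [x_eq5 | x_ne5].
    suff : x <= size [:: u * v; u * u * v; u * v * v; v * v] by rewrite x_eq5.
    apply: (S P _ cover) => d e E dn en Pd.
    by case: (cand d e E dn en Pd) => // -[_]; nia.
  suff : x <= size ([:: u * v; u * u * v; u * v * v; v * v] ++ [:: u * u * v * v]).
    by rewrite /=; lia.
  apply: (S P _ cover) => d e E dn en Pd.
  by case: (cand d e E dn en Pd) => [dL | [-> _]]; rewrite mem_cat ?dL ?mem_head ?orbT.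
- subst v; suff : x <= size [:: u * u; u * u * u; u * u * u * u] by rewrite /=; lia.
  apply: (S P _ cover) => d e E dn en Pd.
  case: (cand d e E dn en Pd) => [|[-> _]]; rewrite !inE ?eqxx ?orbT //.
  by case: (d == u * u); case: (d == u * u * u).
Qed.

Lemma prime_factor3 x p q r : prime x -> prime p -> prime q -> prime r ->
  x %| p * q * r -> exists u v, [/\ prime u, prime v & p * q * r = x * u * v].
Proof.
move=> px pp pq pr; rewrite !Euclid_dvdM // !dvdn_prime2 // => /orP [/orP [] | ] /eqP <-.
- by exists q, r.
- by exists p, r; rewrite [p * x]mulnC.
- by exists p, q; rewrite mulnC mulnA.
Qed.

Lemma small_semiprime x y : prime x -> prime y -> 4 <= x * y <= 8 -> x * y = 4 \/ x * y = 6.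
Proof.
move=> px py /andP [lo hi]; have x2 := prime_gt1 px; have y2 := prime_gt1 py.
have small z : prime z -> z <= 4 -> z = 2 \/ z = 3 by case: z => [|[|[|[|[|]]]]]; auto.
have [] := small x px ltac:(nia); have [] := small y py ltac:(nia); move=> ? ?; subst; lia.
Qed.

(* [n = pq]: at least four pieces are impossible.  Here [k] has a single prime factor,
   so [A] has three and [k <= 4]; together with [k >= 4] this makes the prime [k] equal
   to [4]. *)
Lemma no_many_pieces2 p q A k : prime p -> prime q -> 4 <= k ->
  k * A = (p * q) * (p * q) -> side_bound (p * q) A k -> False.
Proof.
move=> pp pq k4 E S; have N_prod : prodn [:: p; q] = p * q by rewrite /= muln1.
have [K [pK Ek sK bound]] := @few_prime_factors [:: p; q] A k
  ltac:(by rewrite /= pp pq) ltac:(lia) ltac:(by rewrite N_prod) ltac:(by rewrite N_prod).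
case: K pK Ek sK bound => [|x [|y K]] //=; first by move=> _ k1; lia.
rewrite andbT muln1 => px k_eq _ k_le4.
have x4 : x = 4 by move: k_le4; rewrite (_ : 2 ^ 1.*2 = 4) //; lia.
by move: px; rewrite x4.
Qed.

(* Here [k] has one or two prime
   factors.  If one, [k = x >= 5] is a prime factor of [n] and [no_prime_pieces]
   applies; if two, [4 <= k <= 8] gives [k = 4] or [k = 6], so [2 | n] (resp. [6 | n]),
   and [no_four_pieces] (resp. [no_six_pieces]) applies. *)
Lemma no_many_pieces3 p q r A k : prime p -> prime q -> prime r -> 4 <= k ->
  k * A = (p * q * r) * (p * q * r) -> side_bound (p * q * r) A k -> False.
Proof.
move=> pp pq pr k4 E S; have N_prod : prodn [:: p; q; r] = p * q * r.
  by rewrite /= muln1 mulnA.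
have [K [pK Ek sK bound]] := @few_prime_factors [:: p; q; r] A k
  ltac:(by rewrite /= pp pq pr) ltac:(lia) ltac:(by rewrite N_prod) ltac:(by rewrite N_prod).
have k_dvd x : prime x -> x %| k -> x %| p * q * r.
  move=> px xk; have : x %| k * A by apply: dvdn_mulr.
  by rewrite E Euclid_dvdM // orbb.
have cancel_k B : k * A = k * B -> A = B.
  by move/eqP; rewrite eqn_pmul2l ?(leq_trans _ k4) // => /eqP.
case: K pK Ek sK bound => [|x [|y [|z K]]] //=; first by move=> _ k1; lia.
- rewrite andbT muln1 => px k_eq _ _; subst k.
  have x5 : 5 <= x by case: (eqVneq x 4) px => [-> //|]; lia.
  have [u [v [pu pv n_eq]]] := prime_factor3 px pp pq pr (k_dvd x px (dvdnn x)).
  rewrite n_eq in S E; apply: (no_prime_pieces px x5 pu pv).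
  by rewrite -(cancel_k (x * ((u * v) * (u * v)))) // E; nia.
- case/and3P => px py _; rewrite muln1 => k_eq _ bound.
  have := small_semiprime px py; rewrite -k_eq => /(_ ltac:(lia)) [k_eq4 | k_eq6].
  + have [u [v [pu pv n_eq]]] := prime_factor3 (isT : prime 2) pp pq pr
      (k_dvd 2 isT ltac:(by rewrite k_eq4)).
    rewrite n_eq in S E; apply: (no_four_pieces pu pv).
    by rewrite -k_eq4 -(cancel_k ((u * v) * (u * v))) // E k_eq4; nia.
  + have [u [v [pu pv n_eq]]] := prime_factor3 (isT : prime 2) pp pq pr
      (k_dvd 2 isT ltac:(by rewrite k_eq6)).
    have := k_dvd 3 isT ltac:(by rewrite k_eq6); rewrite n_eq -mulnA Euclid_dvdM //=.
    rewrite Euclid_dvdM // !dvdn_prime2 // => /orP [] /eqP u_or_v; subst.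
    * rewrite n_eq in S E; apply: (no_six_pieces pv).
      by rewrite -k_eq6 -(cancel_k (2 * 3 * (v * v))) // E k_eq6; nia.
    * rewrite n_eq [2 * u * 3]mulnAC in S E; apply: (no_six_pieces pu).
      by rewrite -k_eq6 -(cancel_k (2 * 3 * (u * u))) // E k_eq6; nia.
Qed.

Unset Implicit Arguments.

Theorem mainTheorem10 (n : nat) :
  (exists p q, [/\ prime p, prime q & n = p * q]) \/
  (exists p q r, [/\ prime p, prime q, prime r & n = p * q * r]) ->
  ~ (exists s : seq rect, perfect_mondrian_partition n s).
Proof.
move=> n_form [s P].
have k4 := perfect_four_pieces P.
have E := perfect_area P.
have S := perfect_side_bound P.
case: n_form E S => [[p [q [pp pq ->]]] | [p [q [r [pp pq pr ->]]]]] E S.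
- exact: no_many_pieces2 pp pq k4 E S.
- exact: no_many_pieces3 pp pq pr k4 E S.
Qed.
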